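(* Let $e\in\mathfrak{osp}(m|2n)_{\bar0}$ be nilpotent with orthosymplectic partition $(p|q)$, $p=(p_1\ge\cdots\ge p_r)$, $q=(q_1\ge\cdots\ge q_s)$. Then $\dim\mathfrak{osp}(m|2n)^e_{\bar1}=\sum_{i=1}^r\sum_{j=1}^s\min(p_i,q_j)$, which is half of $\dim\mathfrak{gl}(m|2n)^e_{\bar1}$.
   Context: $\mathfrak{osp}(m|2n)\subset\mathfrak{gl}(m|2n)=\mathrm{End}(V_0\oplus V_1)$ is the subalgebra preserving a nondegenerate supersymmetric form $\varphi$ ($V_0\perp V_1$, symmetric on $V_0$, skew on $V_1$): $\mathfrak{osp}(m|2n)_i=\{z\in\mathfrak{gl}(m|2n)_i\mid\varphi(zx,y)=-(-1)^{i\deg x}\varphi(x,zy)\}$. The partition $(p|q)$ consists of the Jordan types of $e|_{V_0}$ and $e|_{V_1}$; $\mathfrak{g}^e$ is the centralizer of $e$. *)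

From HB Require Import structures.
From mathcomp Require Import all_boot all_order all_algebra.
Set Implicit Arguments. Unset Strict Implicit. Unset Printing Implicit Defensive.
Import Order.TTheory GRing.Theory Num.Theory.
Local Open Scope ring_scope.

(* Superspace V = V_0 (+) V_1, dim V_0 = m, dim V_1 = 2n, realised as column
   vectors 'cV_(m + 2n); the first m coordinates span V_0, the last 2n span V_1. *)

Section Super.
Variables (F : fieldType) (m n : nat).
Local Notation N := (m + 2 * n)%N.

(* homogeneous vectors of parity d (false = even, true = odd) *)
Definition homog_vec (d : bool) (x : 'cV[F]_N) : Prop :=
  if d then usubmx x = 0 else dsubmx x = 0.

Definition homog_mx (i : bool) (z : 'M[F]_N) : Prop :=
  if i then ulsubmx z = 0 /\ drsubmx z = 0
  else ursubmx z = 0 /\ dlsubmx z = 0.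

Definition sbracket (i j : bool) (x y : 'M[F]_N) : 'M[F]_N :=
  x *m y - ((-1) ^+ (i && j)) *: (y *m x).

Definition sform (B0 : 'M[F]_m) (B1 : 'M[F]_(2 * n)) (x y : 'cV[F]_N) : F :=
  (x^T *m block_mx B0 0 0 B1 *m y) 0 0.

Definition osp_part (B0 : 'M[F]_m) (B1 : 'M[F]_(2 * n)) (i : bool)
  (z : 'M[F]_N) : Prop :=
  homog_mx i z /\
  forall (d : bool) (x y : 'cV[F]_N), homog_vec d x ->
    sform B0 B1 (z *m x) y = - ((-1) ^+ (i && d)) * sform B0 B1 x (z *m y).

Definition gl_cent_part (e : 'M[F]_N) (i : bool) (z : 'M[F]_N) : Prop :=
  homog_mx i z /\ sbracket false i e z = 0.

Definition osp_cent_part B0 B1 (e : 'M[F]_N) (i : bool) (z : 'M[F]_N) : Prop :=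
  osp_part B0 B1 i z /\ sbracket false i e z = 0.
End Super.

Definition mx_nilpotent (F : fieldType) (k : nat) (A : 'M[F]_k) : Prop :=
  exists t : nat, iter t (mulmx A) 1%:M = 0.

(* partial sums p_1, p_1+p_2, ..., p_1+...+p_r: the last index (1-based) of each block *)
Definition block_ends (s : seq nat) : seq nat :=
  [seq sumn (take t s) | t <- iota 1 (size s)].

(* direct sum J_{p_1} (+) ... (+) J_{p_r} of nilpotent Jordan blocks (ones on the
   superdiagonal inside each block), as a k x k matrix (meaningful when sumn s = k) *)
Definition jordan_nil (F : fieldType) (s : seq nat) (k : nat) : 'M[F]_k :=
  \matrix_(i < k, j < k)
    ((((j : nat) == i.+1) && ((j : nat) \notin block_ends s)) : nat)%:R.

Definition is_partition (p : seq nat) : Prop :=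
  sorted geq p /\ all (fun a => 0 < a)%N p.

Definition jordan_type (F : fieldType) (k : nat) (A : 'M[F]_k) (p : seq nat) : Prop :=
  is_partition p /\ sumn p = k /\
  exists2 P : 'M[F]_k, P \in unitmx & A = P *m jordan_nil F p k *m invmx P.

From HB Require Import structures.
From mathcomp Require Import all_boot all_order all_algebra.
Import Order.TTheory GRing.Theory Num.Theory.
Local Open Scope ring_scope.
Set Implicit Arguments. Unset Strict Implicit. Unset Printing Implicit Defensive.

(* As e is even, e = e0 (+) e1 with e0, e1 skew-adjoint for B0, B1, and an odd
   z = [[0, c], [b, 0]] commutes with e iff b intertwines e0 with e1 and c
   intertwines e1 with e0: gl(m|2n)^e_1 = Hom_e(V0, V1) (+) Hom_e(V1, V0).
   Invariance of the form forces c = - B0^-1 b^T B1 on odd elements of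
   osp(m|2n), and this c commutes with e as soon as b does, by skewness of e0
   and e1: osp(m|2n)^e_1 = Hom_e(V0, V1).  Finally the intertwiners of
   Jordan types p and q form a space of dimension sum_(i,j) min(p_i, q_j):
   an intertwiner out of one block J_x is determined by the image of its
   cyclic vector, which may be any vector killed by the x-th power, and
   ker J_y^k has dimension min(y, k). *)

Section VspaceDim.
Variable F : fieldType.

Lemma dimv_leq_can (U V : vectType F) (S : {vspace U}) (T : {vspace V})
    (f : 'Hom(U, V)) (g : 'Hom(V, U)) :
  {in S, forall x, f x \in T} -> {in S, cancel f g} -> (\dim S <= \dim T)%N.
Proof.
move=> fST fK; apply: (@leq_trans (\dim (g @: T))).
  by apply/dimvS/subvP => x xS; rewrite -(fK x xS) memv_img ?fST.
by rewrite -(limg_ker_dim g T) leq_addl.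
Qed.

Lemma dimv_dim0 (V : vectType F) (S : {vspace V}) : dim V = 0%N -> \dim S = 0%N.
Proof. by move=> V0; apply/eqP; rewrite -leqn0 -V0 -dimvf dimvS ?subvf. Qed.

Lemma dimv_inverse (U V : vectType F) (S : {vspace U}) (T : {vspace V})
    (f : 'Hom(U, V)) (g : 'Hom(V, U)) :
  {in S, forall x, f x \in T} -> {in T, forall y, g y \in S} ->
  {in S, cancel f g} -> {in T, cancel g f} -> \dim S = \dim T.
Proof.
move=> fST gTS fK gK; apply/eqP; rewrite eqn_leq.
by rewrite (dimv_leq_can fST fK) (dimv_leq_can gTS gK).
Qed.

Lemma dim_limg_can (U V : vectType F) (S : {vspace U})
    (f : 'Hom(U, V)) (g : 'Hom(V, U)) :
  cancel f g -> \dim (f @: S) = \dim S.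
Proof.
move=> fK; apply: limg_dim_eq.
by have /lker0P/eqP -> := can_inj fK; rewrite capv0.
Qed.

Lemma dim_add_limg_can (U V1 V2 : vectType F) (S1 : {vspace V1}) (S2 : {vspace V2})
    (f1 : 'Hom(V1, U)) (f2 : 'Hom(V2, U)) (g1 : 'Hom(U, V1)) (g2 : 'Hom(U, V2)) :
  cancel f1 g1 -> cancel f2 g2 -> (forall x, g1 (f2 x) = 0) ->
  \dim (f1 @: S1 + f2 @: S2)%VS = (\dim S1 + \dim S2)%N.
Proof.
move=> f1K f2K g1f2.
rewrite dimv_disjoint_sum ?(dim_limg_can S1 f1K) ?(dim_limg_can S2 f2K) //.
apply/eqP; rewrite -subv0; apply/subvP => _ /memv_capP[/memv_imgP[x1 _ ->]].
by case/memv_imgP=> x2 _ f12; rewrite memv0 -[x1]f1K f12 g1f2 linear0.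
Qed.

End VspaceDim.

Section Intertwiners.
Variable F : fieldType.

Definition intertwiners a b (A : 'M[F]_a) (C : 'M[F]_b) : {vspace 'M[F]_(a, b)} :=
  lker (linfun (mulmx A) - linfun (mulmxr C)).

Lemma mem_intertwiners a b (A : 'M[F]_a) (C : 'M[F]_b) X :
  (X \in intertwiners A C) = (A *m X == X *m C).
Proof. by rewrite memv_ker !lfun_simp /= subr_eq0. Qed.

Definition powker a (A : 'M[F]_a) k : {vspace 'cV[F]_a} :=
  lker (linfun (mulmx (A ^+ k))).

Lemma mem_powker a (A : 'M[F]_a) k v : (v \in powker A k) = (A ^+ k *m v == 0).
Proof. by rewrite memv_ker lfunE. Qed.

Lemma intertwinerX a b (A : 'M[F]_a) (C : 'M[F]_b) X k :
  A *m X = X *m C -> A ^+ k *m X = X *m C ^+ k.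
Proof.
move=> AX; elim: k => [|k IHk]; first by rewrite !expr0 mul1mx mulmx1.
by rewrite !exprS -!mulmxE -mulmxA IHk !mulmxA AX.
Qed.

Lemma exp_block_diag a b (A : 'M[F]_a) (B : 'M[F]_b) k :
  block_mx A 0 0 B ^+ k = block_mx (A ^+ k) 0 0 (B ^+ k).
Proof.
elim: k => [|k IHk]; first by rewrite !expr0 -scalar_mx_block.
by rewrite !exprS IHk -!mulmxE mulmx_block !mulmx0 !mul0mx !addr0 add0r.
Qed.

Lemma dim_intertwiners_conj a b (A : 'M[F]_a) (C : 'M[F]_b) P Q :
  P \in unitmx -> Q \in unitmx ->
  \dim (intertwiners (P *m A *m invmx P) (Q *m C *m invmx Q))
    = \dim (intertwiners A C).
Proof.
move=> Pu Qu.
pose f := (linfun (mulmx (invmx P)) \o linfun (mulmxr Q))%VF.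
pose g := (linfun (mulmx P) \o linfun (mulmxr (invmx Q)))%VF.
have fE X : f X = invmx P *m X *m Q by rewrite comp_lfunE !lfunE /= mulmxA.
have gE X : g X = P *m X *m invmx Q by rewrite comp_lfunE !lfunE /= mulmxA.
apply: (dimv_inverse (f := f) (g := g)) => X; rewrite ?fE ?gE.
- rewrite !mem_intertwiners => /eqP AX; apply/eqP.
  have := congr1 (fun M => invmx P *m M *m Q) AX.
  by rewrite !mulmxA mulVmx // mul1mx mulmxKV.
- rewrite !mem_intertwiners => /eqP AX; apply/eqP.
  by rewrite !mulmxA mulmxKV // -[P *m A *m X]mulmxA AX !mulmxA mulmxKV.
- by rewrite !mulmxA mulmxV // mul1mx mulmxK.
- by rewrite !mulmxA mulVmx // mul1mx mulmxKV.
Qed.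

Lemma dim_intertwiners_block_diag a b1 b2 (A : 'M[F]_a)
    (C1 : 'M[F]_b1) (C2 : 'M[F]_b2) :
  \dim (intertwiners A (block_mx C1 0 0 C2))
    = (\dim (intertwiners A C1) + \dim (intertwiners A C2))%N.
Proof.
pose f1 : 'Hom('M[F]_(a, b1), 'M[F]_(a, b1 + b2)) :=
  linfun (mulmxr (row_mx 1%:M (0 : 'M_(b1, b2)))).
pose f2 : 'Hom('M[F]_(a, b2), 'M[F]_(a, b1 + b2)) :=
  linfun (mulmxr (row_mx (0 : 'M_(b2, b1)) 1%:M)).
have f1E X : f1 X = row_mx X 0 by rewrite lfunE /= mul_mx_row mulmx1 mulmx0.
have f2E X : f2 X = row_mx 0 X by rewrite lfunE /= mul_mx_row mulmx1 mulmx0.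
have AXC X1 X2 : A *m row_mx X1 X2 == row_mx X1 X2 *m block_mx C1 0 0 C2
    = (A *m X1 == X1 *m C1) && (A *m X2 == X2 *m C2).
  rewrite mul_mx_row mul_row_block !mulmx0 addr0 add0r.
  by apply/eqP/andP => [/eq_row_mx[-> ->]|[/eqP-> /eqP->]].
suff -> : intertwiners A (block_mx C1 0 0 C2)
    = (f1 @: intertwiners A C1 + f2 @: intertwiners A C2)%VS.
  apply: (dim_add_limg_can _ _ (g1 := linfun lsubmx) (g2 := linfun rsubmx)) => X;
  by rewrite lfunE /= ?f1E ?f2E ?row_mxKl ?row_mxKr.
apply/vspaceP => X; apply/idP/idP.
  rewrite mem_intertwiners -(hsubmxK X) AXC => /andP[XC1 XC2].
  have -> : row_mx (lsubmx X) (rsubmx X) = f1 (lsubmx X) + f2 (rsubmx X).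
    by rewrite f1E f2E add_row_mx addr0 add0r.
  by rewrite memv_add ?memv_img ?mem_intertwiners.
case/memv_addP=> _ /memv_imgP[X1 X1C ->] [_ /memv_imgP[X2 X2C ->] ->].
rewrite f1E f2E add_row_mx addr0 add0r mem_intertwiners AXC.
by rewrite -!mem_intertwiners X1C.
Qed.

Lemma dim_powker_block_diag a1 a2 (A1 : 'M[F]_a1) (A2 : 'M[F]_a2) k :
  \dim (powker (block_mx A1 0 0 A2) k) = (\dim (powker A1 k) + \dim (powker A2 k))%N.
Proof.
pose f1 : 'Hom('cV[F]_a1, 'cV[F]_(a1 + a2)) := linfun (mulmx (col_mx 1%:M 0)).
pose f2 : 'Hom('cV[F]_a2, 'cV[F]_(a1 + a2)) := linfun (mulmx (col_mx 0 1%:M)).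
have f1E v : f1 v = col_mx v 0 by rewrite lfunE /= mul_col_mx mul1mx mul0mx.
have f2E v : f2 v = col_mx 0 v by rewrite lfunE /= mul_col_mx mul1mx mul0mx.
have Av v1 v2 : (block_mx A1 0 0 A2 ^+ k *m col_mx v1 v2 == 0)
    = (A1 ^+ k *m v1 == 0) && (A2 ^+ k *m v2 == 0).
  rewrite exp_block_diag mul_block_col !mul0mx addr0 add0r -col_mx0.
  by apply/eqP/andP => [/eq_col_mx[-> ->]|[/eqP-> /eqP->]].
suff -> : powker (block_mx A1 0 0 A2) k = (f1 @: powker A1 k + f2 @: powker A2 k)%VS.
  apply: (dim_add_limg_can _ _ (g1 := linfun usubmx) (g2 := linfun dsubmx)) => v;
  by rewrite lfunE /= ?f1E ?f2E ?col_mxKu ?col_mxKd.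
apply/vspaceP => v; apply/idP/idP.
  rewrite mem_powker -(vsubmxK v) Av => /andP[A1v A2v].
  have -> : col_mx (usubmx v) (dsubmx v) = f1 (usubmx v) + f2 (dsubmx v).
    by rewrite f1E f2E add_col_mx addr0 add0r.
  by rewrite memv_add ?memv_img ?mem_powker.
case/memv_addP=> _ /memv_imgP[v1 A1v ->] [_ /memv_imgP[v2 A2v ->] ->].
by rewrite f1E f2E add_col_mx addr0 add0r mem_powker Av -!mem_powker A1v.
Qed.

End Intertwiners.

Section NilpotentJordan.
Variable F : fieldType.

Definition nilblock x : 'M[F]_x := \matrix_(i, j) ((j : nat) == i.+1)%:R.

Fixpoint nilblocks (s : seq nat) : 'M[F]_(sumn s) :=
  if s is x :: s' then block_mx (nilblock x) 0 0 (nilblocks s') else 0.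

Lemma block_ends_cons x s : block_ends (x :: s) = x :: map (addn x) (block_ends s).
Proof.
rewrite /block_ends /= take0 addn0 (iotaDl 1 1) -!map_comp.
by congr (_ :: _); apply: eq_map.
Qed.

Lemma jordan_nil_cons x s :
  jordan_nil F (x :: s) (x + sumn s) = block_mx (nilblock x) 0 0 (jordan_nil F s (sumn s)).
Proof.
apply/matrixP => i j; rewrite -(splitK i) -(splitK j).
case: (split i) => i'; case: (split j) => j';
  rewrite ?block_mxEul ?block_mxEur ?block_mxEdl ?block_mxEdr !mxE /=;
  rewrite block_ends_cons in_cons.
- have /ltn_eqF -> := ltn_ord j'; case: eqP => //= _.
  by case: mapP => //= -[y _ j'E]; move: (ltn_ord j'); rewrite j'E ltnNge leq_addr.
- case: eqP => //= E.
  by rewrite E eqn_leq ltn_ord -E leq_addr.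
- by have /ltn_eqF -> : (j' < (x + i').+1)%N by rewrite ltnS; apply/ltnW/ltn_addr.
- rewrite -addnS eqn_add2l (mem_map (@addnI x)); case: eqP => //= ->.
  by rewrite -[x in _ == x]addn0 eqn_add2l.
Qed.

Lemma jordan_nil_nilblocks s : jordan_nil F s (sumn s) = nilblocks s.
Proof.
elim: s => [|x s IHs] /=; first by apply/matrixP => -[].
by rewrite jordan_nil_cons IHs.
Qed.

Lemma sum_delta_ord x (i : nat) (f : 'I_x -> F) :
  \sum_(l < x) ((l : nat) == i)%:R * f l = if insub i is Some l then f l else 0.
Proof.
case: insubP => [l _ <-|]; last first.
  rewrite -leqNgt => xi; rewrite big1 // => l _.
  by rewrite ltn_eqF ?mul0r // (leq_trans (ltn_ord l)).
rewrite (bigD1 l) //= eqxx mul1r big1 ?addr0 // => l' l'l.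
by rewrite (inj_eq val_inj) (negbTE l'l) mul0r.
Qed.

Lemma nilblockX x k (i j : 'I_x) : (nilblock x ^+ k) i j = ((j : nat) == (i + k)%N)%:R.
Proof.
elim: k i => [|k IHk] i; first by rewrite expr0 mxE addn0 eq_sym.
rewrite exprS -mulmxE mxE; under eq_bigr => l _ do rewrite mxE.
rewrite sum_delta_ord; case: insubP => [l _ li|].
  by rewrite IHk li addSnnS.
rewrite -leqNgt => xi; rewrite ltn_eqF // (leq_trans (ltn_ord j)) //.
by rewrite (leq_trans xi) // -addSnnS leq_addr.
Qed.

Lemma nilblock_nilpotent x : nilblock x ^+ x = 0.
Proof.
by apply/matrixP => i j; rewrite nilblockX mxE ltn_eqF // ltn_addl.
Qed.

Lemma nilblockX_mulmx x k (v : 'cV[F]_x) (i : 'I_x) :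
  (nilblock x ^+ k *m v) i 0 = if insub (i + k)%N is Some l then v l 0 else 0.
Proof. by rewrite mxE; under eq_bigr => l _ do rewrite nilblockX; apply: sum_delta_ord. Qed.

Lemma mem_powker_nilblock y k v :
  (v \in powker (nilblock y) k) = [forall j : 'I_y, (k <= j)%N ==> (v j 0 == 0)].
Proof.
rewrite mem_powker; apply/eqP/forallP => [Jv j | v0].
  apply/implyP => kj; have jk_lt : (j - k < y)%N by rewrite (leq_ltn_trans (leq_subr k j)).
  move/matrixP/(_ (Ordinal jk_lt) 0): Jv.
  by rewrite nilblockX_mulmx mxE /= subnK // valK => ->.
apply/matrixP => i c; rewrite (ord1 c) nilblockX_mulmx mxE.
by case: insubP => // l _ li; apply/eqP/(implyP (v0 l)); rewrite li leq_addl.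
Qed.

Lemma dim_powker_nilblock y k : \dim (powker (nilblock y) k) = minn y k.
Proof.
set r := minn y k; have r_le_y : (r <= y)%N := geq_minl y k.
have -> : r = \dim (fullv : {vspace 'cV[F]_r}) by rewrite dimvf dim_matrix mulr1.
apply: (dimv_inverse (f := linfun (mulmx (pid_mx r : 'M_(r, y))))
                     (g := linfun (mulmx (pid_mx r : 'M_(y, r))))) => [v _|w _|v|w _];
  rewrite ?memvf // !lfunE /= ?mulmxA ?pid_mx_id //.
- rewrite mem_powker_nilblock; apply/forallP => j; apply/implyP => kj.
  rewrite mxE big1 // => l _; rewrite mxE.
  by rewrite ltnNge (leq_trans (geq_minr y k) kj) andbF mul0r.
- rewrite mem_powker_nilblock => /forallP v0; apply/matrixP => j c; rewrite (ord1 c) mxE.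
  under eq_bigr => l _ do rewrite mxE -mulnb natrM -mulrA eq_sym.
  rewrite sum_delta_ord valK; case: ltnP => jr; first by rewrite mul1r.
  rewrite mul0r; apply/esym/eqP/(implyP (v0 j)).
  by move: jr; rewrite /r geq_min leqNgt ltn_ord.
- by rewrite pid_mx_1 mul1mx.
Qed.

Definition e_last x : 'cV[F]_x := \col_(j < x) ((j : nat) == x.-1)%:R.

Lemma nilblockX_e_last x k (j : 'I_x) :
  (nilblock x ^+ k *m e_last x) j 0 = ((j + k)%N == x.-1)%:R.
Proof.
rewrite nilblockX_mulmx; case: insubP => [l _ <-|]; first by rewrite mxE.
by rewrite -leqNgt => xjk; rewrite gtn_eqF // (ltn_predK (ltn_ord j)).
Qed.

(* The intertwiner from [nilblock x] to [A] with last column [v]: its columns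
   are A^(x-1) v, ..., A v, v. *)
Definition krylov a x (A : 'M[F]_a) (v : 'cV[F]_a) : 'M[F]_(a, x) :=
  \matrix_(i, c) (A ^+ (x.-1 - c) *m v) i 0.

Fact krylov_is_linear a x (A : 'M[F]_a) : linear (@krylov a x A).
Proof.
move=> t u v; apply/matrixP => i c; rewrite !mxE big_distrr -big_split /=.
by apply: eq_bigr => j _; rewrite !mxE mulrDr mulrCA.
Qed.

HB.instance Definition _ a x A :=
  GRing.isLinear.Build _ _ _ _ (@krylov a x A) (krylov_is_linear x A).

Lemma krylov_intertwiner a x (A : 'M[F]_a) v :
  A ^+ x *m v = 0 -> A *m krylov x A v = krylov x A v *m nilblock x.
Proof.
move=> Axv; apply/matrixP => i c.
have -> : (A *m krylov x A v) i c = (A ^+ (x.-1 - c).+1 *m v) i 0.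
  by rewrite exprS -mulmxE -mulmxA !mxE; apply: eq_bigr => l _; rewrite !mxE.
rewrite [RHS]mxE; under eq_bigr => l _ do rewrite [nilblock _ _ _]mxE mulrC.
case: c => -[|c] c_lt /=.
  rewrite big1 => [|l _]; last by rewrite mul0r.
  by rewrite subn0 (ltn_predK c_lt) Axv mxE.
under eq_bigr => l _ do rewrite eqSS eq_sym.
rewrite sum_delta_ord; case: insubP => [l _ lc|]; last by rewrite ltnW.
by rewrite [RHS]mxE lc subnSK // ltn_predRL.
Qed.

Lemma intertwiner_krylov a x (A : 'M[F]_a) X :
  A *m X = X *m nilblock x -> krylov x A (X *m e_last x) = X.
Proof.
move=> AX; apply/matrixP => i c; rewrite mxE mulmxA (intertwinerX _ AX) -mulmxA mxE.
have c_le : (c <= x.-1)%N by rewrite -ltnS (ltn_predK (ltn_ord c)).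
have lc l : ((l + (x.-1 - c))%N == x.-1) = (l == c).
  by rewrite -[in RHS](eqn_add2r (x.-1 - c)) subnKC.
under eq_bigr => l _ do rewrite nilblockX_e_last lc mulrC.
by rewrite sum_delta_ord valK.
Qed.

Lemma krylov_e_last a x (A : 'M[F]_a) v : (0 < x)%N -> krylov x A v *m e_last x = v.
Proof.
move=> x_gt0; apply/matrixP => i j; rewrite (ord1 j) mxE.
under eq_bigr => c _ do rewrite [e_last _ _ _]mxE mulrC.
rewrite sum_delta_ord; case: insubP => [c _ cx|]; last by rewrite ltn_predL x_gt0.
by rewrite mxE cx subnn expr0 mul1mx.
Qed.

Lemma dim_intertwiners_nilblock a x (A : 'M[F]_a) :
  \dim (intertwiners A (nilblock x)) = \dim (powker A x).
Proof.
pose f : 'Hom('M[F]_(a, x), 'cV[F]_a) := linfun (mulmxr (e_last x)).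
pose g : 'Hom('cV[F]_a, 'M[F]_(a, x)) := linfun (krylov x A).
have fE X : f X = X *m e_last x by rewrite lfunE.
have gE v : g v = krylov x A v by rewrite lfunE.
apply: (dimv_inverse (f := f) (g := g)) => [X|v|X|v]; rewrite ?fE ?gE.
- rewrite mem_intertwiners mem_powker => /eqP AX.
  by rewrite mulmxA (intertwinerX _ AX) nilblock_nilpotent mulmx0 mul0mx eqxx.
- by rewrite mem_powker mem_intertwiners => /eqP/krylov_intertwiner->; rewrite eqxx.
- by rewrite mem_intertwiners => /eqP/intertwiner_krylov.
- rewrite mem_powker; case: x {f g fE gE} => [|x] /eqP Axv; last exact: krylov_e_last.
  by move: Axv; rewrite expr0 mul1mx => ->; apply/matrixP => i j; rewrite !mxE big_ord0.
Qed.

Lemma dim_intertwiners_nilblocks a (A : 'M[F]_a) p :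
  \dim (intertwiners A (nilblocks p)) = (\sum_(x <- p) \dim (powker A x))%N.
Proof.
elim: p => [|x p IHp] /=; first by rewrite big_nil dimv_dim0 ?dim_matrix ?mulr0.
by rewrite dim_intertwiners_block_diag dim_intertwiners_nilblock IHp big_cons.
Qed.

Lemma dim_powker_nilblocks q k :
  \dim (powker (nilblocks q) k) = (\sum_(y <- q) minn y k)%N.
Proof.
elim: q => [|y q IHq] /=; first by rewrite big_nil dimv_dim0 ?dim_matrix ?mul0r.
by rewrite dim_powker_block_diag dim_powker_nilblock IHq big_cons.
Qed.

Lemma dim_intertwiners_jordan a b (A : 'M[F]_a) (C : 'M[F]_b) q p :
  jordan_type A q -> jordan_type C p ->
  \dim (intertwiners A C) = (\sum_(y <- q) \sum_(x <- p) minn y x)%N.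
Proof.
case=> _ [qa [P Pu ->]] [_ [pb [Q Qu ->]]]; rewrite dim_intertwiners_conj //.
subst a b; rewrite !jordan_nil_nilblocks dim_intertwiners_nilblocks exchange_big /=.
by apply: eq_bigr => x _; rewrite dim_powker_nilblocks.
Qed.

End NilpotentJordan.

Section Forms.
Variable F : fieldType.

Lemma form_mx_eq0 k l (M : 'M[F]_(k, l)) :
  (forall (u : 'cV[F]_k) (v : 'cV[F]_l), (u^T *m M *m v) 0 0 = 0) -> M = 0.
Proof.
move=> M0; apply/matrixP => i j; have := M0 (delta_mx i 0) (delta_mx j 0).
by rewrite trmx_delta -rowE -colE !mxE.
Qed.

Lemma form_skew k (B M : 'M[F]_k) :
  (forall u v : 'cV[F]_k, ((M *m u)^T *m B *m v) 0 0 = - (u^T *m B *m (M *m v)) 0 0) ->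
  M^T *m B = - (B *m M).
Proof.
move=> skewM; apply/eqP; rewrite -addr_eq0; apply/eqP/form_mx_eq0 => u v.
rewrite mulmxDr mulmxDl mxE [u^T *m (M^T *m B)]mulmxA -trmx_mul skewM.
by rewrite [u^T *m (B *m M)]mulmxA -[u^T *m B *m M *m v]mulmxA addNr.
Qed.

End Forms.

Section OrthosymplecticBlocks.
Variables (F : fieldType) (m n : nat) (B0 : 'M[F]_m) (B1 : 'M[F]_(2 * n)).
Local Notation N := (m + 2 * n)%N.

Lemma sform_col_mx (u u' : 'cV[F]_m) (w w' : 'cV[F]_(2 * n)) :
  sform B0 B1 (col_mx u w) (col_mx u' w') = (u^T *m B0 *m u' + w^T *m B1 *m w') 0 0.
Proof. by rewrite /sform tr_col_mx mul_row_block !mulmx0 addr0 add0r mul_row_col. Qed.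

Lemma homog_mx_even (z : 'M[F]_N) :
  homog_mx false z -> z = block_mx (ulsubmx z) 0 0 (drsubmx z).
Proof. by case=> ur0 dl0; rewrite -{1}[z]submxK ur0 dl0. Qed.

Lemma homog_mx_odd (z : 'M[F]_N) :
  homog_mx true z -> z = block_mx 0 (ursubmx z) (dlsubmx z) 0.
Proof. by case=> ul0 dr0; rewrite -{1}[z]submxK ul0 dr0. Qed.

Lemma osp_even_skew e0 e1 : osp_part B0 B1 false (block_mx e0 0 0 e1) ->
  e0^T *m B0 = - (B0 *m e0) /\ e1^T *m B1 = - (B1 *m e1).
Proof.
case=> _ invB; split; apply: form_skew => u v.
  have := invB false (col_mx u 0) (col_mx v 0) (col_mxKd _ _).
  rewrite !mul_block_col !mulmx0 !mul0mx !addr0 !sform_col_mx !trmx0 !mul0mx.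
  by rewrite !addr0 expr0 mulN1r.
have := invB true (col_mx 0 u) (col_mx 0 v) (col_mxKu _ _).
rewrite !mul_block_col !mulmx0 !mul0mx !add0r !sform_col_mx !trmx0 !mul0mx.
by rewrite !add0r expr0 mulN1r.
Qed.

Lemma sbracket_diag_antidiag_eq0 (e0 : 'M[F]_m) (e1 : 'M[F]_(2 * n)) c b :
  sbracket false true (block_mx e0 0 0 e1) (block_mx 0 c b 0) = 0 <->
  e0 *m c = c *m e1 /\ e1 *m b = b *m e0.
Proof.
rewrite /sbracket /= expr0 scale1r !mulmx_block !mulmx0 !mul0mx !addr0 !add0r.
rewrite opp_block_mx add_block_mx !oppr0 !addr0.
split=> [E | [-> ->]]; last by rewrite !subrr block_mx0.
have := etrans E (esym (block_mx0 _ _ _ _ _)).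
by case/eq_block_mx => _ /subr0_eq ? /subr0_eq ? _.
Qed.

Definition osp_ur (b : 'M[F]_(2 * n, m)) : 'M[F]_(m, 2 * n) := - (invmx B0 *m b^T *m B1).
Definition osp_odd_mx b : 'M[F]_N := block_mx 0 (osp_ur b) b 0.
Definition lower_mx (b : 'M[F]_(2 * n, m)) : 'M[F]_N := block_mx 0 0 b 0.
Definition upper_mx (c : 'M[F]_(m, 2 * n)) : 'M[F]_N := block_mx 0 c 0 0.

Hypotheses (hB0 : B0^T = B0) (hB0u : B0 \in unitmx) (hB1 : B1^T = - B1).

Lemma osp_part_odd_mx b : osp_part B0 B1 true (osp_odd_mx b).
Proof.
split; first by rewrite /homog_mx block_mxKul block_mxKdr.
move=> d x y hx; rewrite /osp_odd_mx -(vsubmxK x) -(vsubmxK y).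
case: d hx => /= ->; rewrite !mul_block_col !mul0mx ?mulmx0 ?add0r ?addr0 !sform_col_mx.
  rewrite !trmx0 !mul0mx ?mulmx0 ?add0r ?addr0 expr1 opprK mul1r.
  rewrite /osp_ur trmx_mul linearN /= !trmx_mul trmxK trmx_inv hB0 hB1.
  by rewrite mulNmx opprK !mulmxA mulmxKV.
rewrite !trmx0 !mul0mx ?mulmx0 ?add0r ?addr0 expr0 mulN1r.
suff -> : (usubmx x)^T *m B0 *m (osp_ur b *m dsubmx y)
    = - ((b *m usubmx x)^T *m B1 *m dsubmx y) by rewrite [in RHS]mxE opprK.
by rewrite /osp_ur mulNmx mulmxN !mulmxA mulmxK // trmx_mul.
Qed.

Lemma osp_part_odd_ur c b : osp_part B0 B1 true (block_mx 0 c b 0) -> c = osp_ur b.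
Proof.
case=> _ invB.
have Bc : b^T *m B1 + B0 *m c = 0.
  apply: form_mx_eq0 => u w; have := invB false (col_mx u 0) (col_mx 0 w) (col_mxKd _ _).
  rewrite !mul_block_col !mul0mx !mulmx0 !add0r !addr0 !sform_col_mx !trmx0 !mul0mx.
  rewrite !add0r !addr0 expr0 mulN1r mulmxDr mulmxDl => uw.
  by rewrite [in LHS]mxE !mulmxA -trmx_mul uw -!mulmxA addNr.
have : B0 *m c = - (b^T *m B1) by apply/eqP; rewrite -addr_eq0 addrC Bc.
by move/(congr1 (mulmx (invmx B0))); rewrite mulKmx // => ->; rewrite mulmxN mulmxA.
Qed.

Lemma osp_ur_intertwiner (e0 : 'M[F]_m) (e1 : 'M[F]_(2 * n)) b :
  e0^T *m B0 = - (B0 *m e0) -> e1^T *m B1 = - (B1 *m e1) ->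
  e1 *m b = b *m e0 -> e0 *m osp_ur b = osp_ur b *m e1.
Proof.
move=> skew0 skew1 e1b.
have e0B0 : e0 *m invmx B0 = - (invmx B0 *m e0^T).
  have := congr1 (fun M => invmx B0 *m M *m invmx B0) skew0.
  by rewrite mulmxN mulNmx !mulmxA mulVmx // mul1mx mulmxK // => ->; rewrite opprK.
rewrite /osp_ur mulmxN mulNmx !mulmxA e0B0 !mulNmx opprK.
rewrite -[invmx B0 *m e0^T *m b^T]mulmxA -trmx_mul -e1b trmx_mul mulmxA.
by rewrite -!mulmxA skew1 !mulmxN mulmxA.
Qed.

End OrthosymplecticBlocks.

Fact osp_odd_mx_is_linear F m n B0 B1 : linear (@osp_odd_mx F m n B0 B1).
Proof.
move=> k x y; rewrite /osp_odd_mx /osp_ur scale_block_mx add_block_mx !scaler0 !addr0.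
congr block_mx; rewrite linearP /= mulmxDr mulmxDl -scalemxAr -scalemxAl.
by rewrite opprD scalerN.
Qed.

HB.instance Definition _ F m n B0 B1 :=
  GRing.isLinear.Build _ _ _ _ (@osp_odd_mx F m n B0 B1) (osp_odd_mx_is_linear B0 B1).

Fact lower_mx_is_linear F m n : linear (@lower_mx F m n).
Proof. by move=> k x y; rewrite /lower_mx scale_block_mx add_block_mx !scaler0 !addr0. Qed.

HB.instance Definition _ F m n :=
  GRing.isLinear.Build _ _ _ _ (@lower_mx F m n) (@lower_mx_is_linear F m n).

Fact upper_mx_is_linear F m n : linear (@upper_mx F m n).
Proof. by move=> k x y; rewrite /upper_mx scale_block_mx add_block_mx !scaler0 !addr0. Qed.

HB.instance Definition _ F m n :=
  GRing.isLinear.Build _ _ _ _ (@upper_mx F m n) (@upper_mx_is_linear F m n).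

Section OddCentralizers.
Variables (F : fieldType) (m n : nat) (B0 : 'M[F]_m) (B1 : 'M[F]_(2 * n)).
Hypotheses (hB0 : B0^T = B0) (hB0u : B0 \in unitmx) (hB1 : B1^T = - B1).
Variables (e0 : 'M[F]_m) (e1 : 'M[F]_(2 * n)).
Hypotheses (skew0 : e0^T *m B0 = - (B0 *m e0)) (skew1 : e1^T *m B1 = - (B1 *m e1)).
Local Notation e := (block_mx e0 0 0 e1).

Definition osp_odd_cent : {vspace 'M[F]_(m + 2 * n)} :=
  (linfun (osp_odd_mx B0 B1) @: intertwiners e1 e0)%VS.

Definition gl_odd_cent : {vspace 'M[F]_(m + 2 * n)} :=
  (linfun (@lower_mx F m n) @: intertwiners e1 e0
   + linfun (@upper_mx F m n) @: intertwiners e0 e1)%VS.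

Let dlsubmx_lfun : 'Hom('M[F]_(m + 2 * n), 'M[F]_(2 * n, m)) :=
  (linfun lsubmx \o linfun dsubmx)%VF.
Let ursubmx_lfun : 'Hom('M[F]_(m + 2 * n), 'M[F]_(m, 2 * n)) :=
  (linfun rsubmx \o linfun usubmx)%VF.

Lemma mem_osp_odd_cent z : z \in osp_odd_cent <-> osp_cent_part B0 B1 e true z.
Proof.
split.
  case/memv_imgP=> b; rewrite mem_intertwiners lfunE /= => /eqP e1b ->.
  split; first exact: osp_part_odd_mx.
  by apply/sbracket_diag_antidiag_eq0; split=> //; apply: osp_ur_intertwiner.
case=> ospz comm; have := homog_mx_odd (proj1 ospz).
move: (ursubmx z) (dlsubmx z) => c b zE; subst z.
have [_ e1b] := (sbracket_diag_antidiag_eq0 _ _ _ _).1 comm.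
apply/memv_imgP; exists b; first by rewrite mem_intertwiners e1b eqxx.
by rewrite lfunE /= /osp_odd_mx -(osp_part_odd_ur hB0u ospz).
Qed.

Lemma mem_gl_odd_cent z : z \in gl_odd_cent <-> gl_cent_part e true z.
Proof.
split.
  case/memv_addP=> _ /memv_imgP[b e1b ->] [_ /memv_imgP[c e0c ->] ->].
  rewrite !lfunE /= /lower_mx /upper_mx add_block_mx !addr0 !add0r.
  split; first by rewrite /homog_mx block_mxKul block_mxKdr.
  move: e1b e0c; rewrite !mem_intertwiners => /eqP e1b /eqP e0c.
  by apply/sbracket_diag_antidiag_eq0.
case=> homz comm; have := homog_mx_odd homz.
move: (ursubmx z) (dlsubmx z) => c b zE; subst z.
have [e0c e1b] := (sbracket_diag_antidiag_eq0 _ _ _ _).1 comm.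
apply/memv_addP; exists (linfun (@lower_mx F m n) b).
  by rewrite memv_img // mem_intertwiners e1b eqxx.
exists (linfun (@upper_mx F m n) c).
  by rewrite memv_img // mem_intertwiners e0c eqxx.
by rewrite !lfunE /= /lower_mx /upper_mx add_block_mx !addr0 !add0r.
Qed.

Lemma dim_osp_odd_cent : \dim osp_odd_cent = \dim (intertwiners e1 e0).
Proof.
apply: (dim_limg_can _ (g := dlsubmx_lfun)) => b.
by rewrite comp_lfunE !lfunE /= col_mxKd row_mxKl.
Qed.

Lemma dim_gl_odd_cent :
  \dim gl_odd_cent = (\dim (intertwiners e1 e0) + \dim (intertwiners e0 e1))%N.
Proof.
apply: (dim_add_limg_can _ _ (g1 := dlsubmx_lfun) (g2 := ursubmx_lfun)) => x;
  by rewrite comp_lfunE !lfunE /= ?col_mxKd ?col_mxKu ?row_mxKl ?row_mxKr.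
Qed.

End OddCentralizers.

Unset Implicit Arguments. Set Strict Implicit.

Theorem mainTheorem5
  (F : closedFieldType) (hF : [pchar F] =i pred0) (m n : nat)
  (B0 : 'M[F]_m) (B1 : 'M[F]_(2 * n))
  (hB0 : B0^T = B0) (hB0u : B0 \in unitmx)
  (hB1 : B1^T = - B1) (hB1u : B1 \in unitmx)
  (e : 'M[F]_(m + 2 * n))
  (he : osp_part B0 B1 false e) (hnil : mx_nilpotent e)
  (p q : seq nat)
  (hp : jordan_type (ulsubmx e) p) (hq : jordan_type (drsubmx e) q) :
  exists U : {vspace 'M[F]_(m + 2 * n)},
  exists W : {vspace 'M[F]_(m + 2 * n)},
    (forall z, z \in U <-> osp_cent_part B0 B1 e true z) /\
    (forall z, z \in W <-> gl_cent_part e true z) /\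
    \dim U = (\sum_(a <- p) \sum_(b <- q) minn a b)%N /\
    (\dim W = 2 * \dim U)%N.
Proof.
have eE := homog_mx_even (proj1 he).
move: (ulsubmx e) (drsubmx e) eE hp hq => e0 e1 eE hp hq; subst e.
have [skew0 skew1] := osp_even_skew he.
set d := (\sum_(a <- p) \sum_(b <- q) minn a b)%N.
have d10 : \dim (intertwiners e1 e0) = d.
  rewrite (dim_intertwiners_jordan hq hp) exchange_big.
  by apply: eq_bigr => a _; apply: eq_bigr => b _; rewrite minnC.
have d01 : \dim (intertwiners e0 e1) = d by exact: dim_intertwiners_jordan.
exists (osp_odd_cent B0 B1 e0 e1), (gl_odd_cent e0 e1).
split; [|split; [|split]].
- exact: mem_osp_odd_cent.
- exact: mem_gl_odd_cent.
- by rewrite dim_osp_odd_cent.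
- by rewrite dim_gl_odd_cent dim_osp_odd_cent d10 d01 mul2n addnn.
Qed.
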